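(* Let $\Omega$ be a finite set, $\phi:\mathbb{R}\to\mathbb{R}_{+}$ increasing, $c\in\mathbb{R}^{|\Omega|}_{+}$, $\sigma\ge0$, and $H_{\mathbb{B}}=\{(x,z)\in\{0,1\}^{|\Omega|}\times\mathbb{R}_{+}:\phi(\sigma+\sum_{i\in\Omega}c_ix_i)\le z\}$. Define $f_\sigma(\mathcal{S})=\phi(\sigma+\sum_{i\in\mathcal{S}}c_i)$ and $g_\sigma(\mathcal{S})=f_\sigma(\mathcal{S})-\phi(\sigma)$. Then for any $\gamma\in\Gamma(g_\sigma)$ the inequality $$-|\Omega|D[f_\sigma]+\sum_{s\in\Omega}\gamma_sx_s\le z-\phi(\sigma)$$ is valid for $\mathrm{conv}(H_{\mathbb{B}})$.
   Context: For a set function $h$ and permutation $\pi$ of $\Omega$, $\mathcal{S}^\pi_0=\emptyset$, $\mathcal{S}^\pi_k=\{\pi_1,\dots,\pi_k\}$; $\Gamma(h)=\{\gamma\in\mathbb{R}^{|\Omega|}:\exists$ permutation $\pi$ with $\gamma_{\pi_i}=h(\mathcal{S}^\pi_i)-h(\mathcal{S}^\pi_{i-1})$ for all $i\}$. $D[h]=\max\{h(\mathcal{A}\cup\mathcal{B}\cup\{s\})-h(\mathcal{A}\cup\mathcal{B})-h(\mathcal{A}\cup\{s\})+h(\mathcal{A}):\mathcal{A},\mathcal{B}\subseteq\Omega,s\in\Omega,|\mathcal{A}|\le|\Omega|-1\}$. *)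

From HB Require Import structures.
From mathcomp Require Import all_boot all_order all_algebra.
Set Implicit Arguments. Unset Strict Implicit. Unset Printing Implicit Defensive.
Import Order.TTheory GRing.Theory Num.Theory.
Local Open Scope ring_scope.

Section Defs.
Variables (R : realFieldType) (T : finType).

(* S^pi_k = {pi_1, ..., pi_k}; a permutation of Omega is an injective map
   from positions 'I_#|T| (0-based: position i is pi_{i+1}) to T. *)
Definition prefix (pi : 'I_#|T| -> T) (k : nat) : {set T} :=
  [set pi i | i : 'I_#|T| & (i < k)%N].

Definition in_Gamma (h : {set T} -> R) (gamma : T -> R) : Prop :=
  exists pi : 'I_#|T| -> T, injective pi /\
    forall i : 'I_#|T|, gamma (pi i) = h (prefix pi i.+1) - h (prefix pi i).

(* The default 0 of the big max is harmless: taking B = set0 shows the max is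
   >= 0 whenever Omega is nonempty. *)
Definition Dh (h : {set T} -> R) : R :=
  \big[Num.max/0]_(p : {set T} * {set T} * T | (#|p.1.1| <= #|T| - 1)%N)
    (h (p.1.1 :|: p.1.2 :|: [set p.2]) - h (p.1.1 :|: p.1.2)
     - h (p.1.1 :|: [set p.2]) + h p.1.1).

Definition f_sigma (phi : R -> R) (c : T -> R) (sigma : R) (S : {set T}) : R :=
  phi (sigma + \sum_(i in S) c i).

Definition g_sigma (phi : R -> R) (c : T -> R) (sigma : R) (S : {set T}) : R :=
  f_sigma phi c sigma S - phi sigma.

Definition H_B (phi : R -> R) (c : T -> R) (sigma : R) (x : T -> R) (z : R) : Prop :=
  (forall i, x i = 0 \/ x i = 1) /\ 0 <= z /\
  phi (sigma + \sum_(i : T) c i * x i) <= z.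

Definition conv (P : (T -> R) -> R -> Prop) (x : T -> R) (z : R) : Prop :=
  exists (n : nat) (lam : 'I_n -> R) (px : 'I_n -> T -> R) (pz : 'I_n -> R),
    (forall k, 0 <= lam k) /\ \sum_(k < n) lam k = 1 /\
    (forall k, P (px k) (pz k)) /\
    (forall i, x i = \sum_(k < n) lam k * px k i) /\
    z = \sum_(k < n) lam k * pz k.

End Defs.

(* Write the 0/1 point as the indicator of a set S and read gamma along its
   permutation pi, so that sum_{s in S} gamma_s telescopes the marginals
   g(P_{k+1}) - g(P_k) over the prefixes P_k of pi with pi_k in S.  Replacing
   each such marginal by the marginal of pi_k over P_k ∩ S costs at most D[f],
   by the definition of D with A = P_k ∩ S and B = P_k, and the replaced sum
   telescopes to f(S) - f(∅) <= z - phi(sigma).  Valid inequalities for a set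
   remain valid for its convex hull. *)

From Pilot Require Import Defs.
From HB Require Import structures.
From mathcomp Require Import all_boot all_order all_algebra.
From mathcomp Require Import lra.
Import Order.TTheory GRing.Theory Num.Theory.
Local Open Scope ring_scope.

Set Implicit Arguments.

Section Prefix.
Variables (T : finType) (pi : 'I_#|T| -> T).
Hypothesis pi_inj : injective pi.

Lemma prefix0 : Defs.prefix pi 0 = set0.
Proof. by apply/setP => y; rewrite inE; apply/imsetP => -[i]; rewrite inE ltn0. Qed.

Lemma prefixT : Defs.prefix pi #|T| = setT.
Proof.
have [pi' _ pi'K] : bijective pi by apply: inj_card_bij; rewrite // card_ord.
by apply/setP => y; rewrite inE -[y]pi'K; apply: imset_f; rewrite inE.
Qed.

Lemma prefixS (k : 'I_#|T|) : Defs.prefix pi k.+1 = pi k |: Defs.prefix pi k.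
Proof.
apply/setP => y; rewrite in_setU1; apply/imsetP/predU1P => [[i]|].
  rewrite inE ltnS leq_eqVlt => /orP[/eqP/val_inj-> -> | ik ->]; first by left.
  by right; apply: imset_f; rewrite inE.
case=> [->|/imsetP[i]]; first by exists k; rewrite ?inE.
by rewrite inE => ik ->; exists i; rewrite // inE ltnW.
Qed.

Lemma notin_prefix (k : 'I_#|T|) : pi k \notin Defs.prefix pi k.
Proof. by apply/imsetP => -[i]; rewrite inE => ik /pi_inj ki; rewrite ki ltnn in ik. Qed.

End Prefix.

Section Defect.
Variables (R : realFieldType) (T : finType) (h : {set T} -> R).

Lemma Dh_ge0 : 0 <= Dh h.
Proof. by rewrite /Dh; elim/big_rec: _ => // p x _ x_ge0; rewrite le_max x_ge0 orbT. Qed.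

Lemma le_Dh (A B : {set T}) (s : T) : (#|A| <= #|T| - 1)%N ->
  h (A :|: B :|: [set s]) - h (A :|: B) - h (A :|: [set s]) + h A <= Dh h.
Proof. by move=> cardA; rewrite /Dh (bigD1 (A, B, s)) //= le_max lexx. Qed.

Lemma marginal_le_Dh (A B : {set T}) (s : T) : A \subset B -> s \notin A ->
  h (B :|: [set s]) - h B <= h (A :|: [set s]) - h A + Dh h.
Proof.
move=> AB sA; have cardA : (#|A| <= #|T| - 1)%N.
  rewrite subn1 -(cardsC1 s); apply/subset_leq_card/subsetP => y yA.
  by rewrite in_setC1; apply: contraNneq sA => <-.
by have := le_Dh A B s cardA; rewrite (setUidPr AB); lra.
Qed.

End Defect.

Lemma in_Gamma_subr (R : realFieldType) (T : finType) {h : {set T} -> R} {a : R}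
    {gamma : T -> R} :
  in_Gamma (fun S => h S - a) gamma -> in_Gamma h gamma.
Proof.
case=> pi [pi_inj gammaE]; exists pi; split=> // k.
by rewrite gammaE opprB addrA subrK.
Qed.

Lemma sum_in_Gamma_le (R : realFieldType) (T : finType) (h : {set T} -> R)
    gamma (S : {set T}) : in_Gamma h gamma ->
  \sum_(s in S) gamma s <= h S - h set0 + #|T|%:R * Dh h.
Proof.
case=> pi [pi_inj gammaE].
have pi_bij : bijective pi by apply: inj_card_bij; rewrite // card_ord.
pose F k := h (Defs.prefix pi k :&: S).
have telescope : \sum_(k < #|T|) (F k.+1 - F k) = h S - h set0.
  rewrite -(big_mkord xpredT (fun k => F k.+1 - F k)) telescope_sumr //.
  by rewrite /F prefixT // prefix0 setTI set0I.
rewrite (reindex pi) /=; last by apply: onW_bij.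
rewrite big_mkcond -telescope mulr_natl.
rewrite -[in Dh h *+ _](card_ord #|T|) -sumr_const -big_split /=; apply: ler_sum => k _.
have Pk_pik := notin_prefix pi_inj k.
case: ifP => [Spik | /negbT Spik].
  have pikS : [set pi k] :&: S = [set pi k] by apply/setIidPl; rewrite sub1set.
  rewrite gammaE /F prefixS setIUl pikS !(setUC [set pi k]).
  by apply: marginal_le_Dh; [apply: subsetIl | apply: contra Pk_pik; case/setIP].
rewrite /F prefixS setIUl (_ : [set pi k] :&: S = set0) ?set0U ?subrr ?add0r.
  exact: Dh_ge0.
by apply/setP => y; rewrite !inE; apply/andP => -[/eqP->]; apply/negP.
Qed.

Lemma sum_mul_indicator (R : realFieldType) (T : finType) (a x : T -> R) :
  (forall i, x i = 0 \/ x i = 1) ->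
  \sum_(i : T) a i * x i = \sum_(i in [set i | x i == 1]) a i.
Proof.
move=> x01; rewrite [RHS]big_mkcond; apply: eq_bigr => i _; rewrite inE.
by case: (x01 i) => ->; rewrite ?mulr0 ?mulr1 ?eqxx // eq_sym oner_eq0.
Qed.

Lemma conv_le (R : realFieldType) (T : finType) (P : (T -> R) -> R -> Prop)
    (a : T -> R) (b : R) :
  (forall x z, P x z -> \sum_(s : T) a s * x s <= z + b) ->
  forall x z, conv P x z -> \sum_(s : T) a s * x s <= z + b.
Proof.
move=> Pvalid x z [n [lam [px [pz [lam_ge0 [lam_sum1 [Ppx [xE zE]]]]]]]].
have -> : \sum_(s : T) a s * x s = \sum_(k < n) lam k * \sum_(s : T) a s * px k s.
  under eq_bigr => s _ do rewrite xE mulr_sumr.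
  rewrite exchange_big; apply: eq_bigr => k _; rewrite mulr_sumr.
  by apply: eq_bigr => s _; rewrite mulrCA.
rewrite zE -[b]mul1r -lam_sum1 mulr_suml -big_split /=; apply: ler_sum => k _.
by rewrite -mulrDr ler_wpM2l ?Pvalid.
Qed.

Theorem mainTheorem9 (R : realFieldType) (T : finType) (phi : R -> R)
  (c : T -> R) (sigma : R)
  (phi_incr : {homo phi : a b / a <= b})
  (phi_nonneg : forall t, 0 <= phi t)
  (c_nonneg : forall i, 0 <= c i)
  (sigma_nonneg : 0 <= sigma)
  (gamma : T -> R) (hgamma : in_Gamma (g_sigma phi c sigma) gamma) :
  forall (x : T -> R) (z : R), conv (H_B phi c sigma) x z ->
    - (#|T|%:R * Dh (f_sigma phi c sigma)) + \sum_(s : T) gamma s * x s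
      <= z - phi sigma.
Proof.
set f := f_sigma phi c sigma; move=> x z xz_conv.
suff : \sum_(s : T) gamma s * x s <= z + (#|T|%:R * Dh f - phi sigma) by lra.
move: x z xz_conv; apply: conv_le => x z [x01 [_ phi_le_z]].
have f0 : f set0 = phi sigma by rewrite /f /f_sigma big_set0 addr0.
have fS : f [set i | x i == 1] <= z by rewrite /f /f_sigma -sum_mul_indicator.
have := sum_in_Gamma_le [set i | x i == 1] (in_Gamma_subr (h := f) hgamma).
by rewrite -sum_mul_indicator // f0; lra.
Qed.
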